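(* Let $P_n$ be the path on $n\ge 3$ vertices $1,\dots,n$ with edges $e_i=\{i,i+1\}$ ($1\le i\le n-1$), let $f_j=\{j,j+2\}$ ($1\le j\le n-2$), let $B=\{e_1,f_1,e_2,f_2,\dots,e_{n-2},f_{n-2},e_{n-1}\}$ (a basis of the row space of $\mathfrak{D}_2(P_n)$), and let $\mathfrak{D}_{P_n}=\mathfrak{D}_2(P_n)[B,B]$. For $\alpha\in B$, let $\mathfrak{D}_{P_n}(\alpha|\alpha)$ be the matrix obtained from $\mathfrak{D}_{P_n}$ by deleting the row and column indexed by $\alpha$. Then $\det\mathfrak{D}_{P_n}(\alpha|\alpha)=-(n-1)$ if $\alpha$ is a pendant edge of $P_n$ (i.e. $\alpha\in\{e_1,e_{n-1}\}$), and $\det\mathfrak{D}_{P_n}(\alpha|\alpha)=-(2n-3)$ otherwise.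
   Context: For a tree $T$, let $\mathcal{V}_2$ be the set of 2-element vertex subsets (edges regarded as elements of $\mathcal{V}_2$). The 2-Steiner distance matrix $\mathfrak{D}_2(T)$ is indexed by $\mathcal{V}_2$, with entry in row $\{i,j\}$, column $\{k,l\}$ equal to the minimum number of edges of a connected subtree of $T$ whose vertex set contains $i,j,k,l$. $M[B,B]$ denotes the principal submatrix with rows and columns indexed by $B$. *)

From mathcomp Require Import all_boot all_order all_algebra.
Set Implicit Arguments. Unset Strict Implicit. Unset Printing Implicit Defensive.
Import GRing.Theory Num.Theory.
Local Open Scope ring_scope.

Definition induced_connected (T : finType) (e : rel T) (W : {set T}) : bool :=
  [forall x in W, forall y in W,
     connect [rel a b | [&& e a b, a \in W & b \in W]] x y].

(* Steiner distance of S in a tree (T,e): the minimum number of edges of a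
   connected subtree whose vertex set contains S.  A connected subtree of a
   tree with vertex set W is the induced subgraph on W and has #|W| - 1 edges. *)
Definition steiner_dist (T : finType) (e : rel T) (S : {set T}) : nat :=
  \big[minn/#|T|]_(W : {set T} | (S \subset W) && induced_connected e W) (#|W|).-1.

(* The path P_n on vertices 0, ..., n-1 (paper's 1..n shifted by one). *)
Definition path_rel (n : nat) : rel 'I_n :=
  fun x y : 'I_n => (x.+1 == y :> nat) || (y.+1 == x :> nat).

(* The basis B, indexed by k : 'I_(2n-3) in the order
   e_1, f_1, e_2, f_2, ..., e_{n-2}, f_{n-2}, e_{n-1}:
   k = 2m   gives e_{m+1} = {m, m+1}   (0-based vertices),
   k = 2m+1 gives f_{m+1} = {m, m+2}. *)
Definition B_elt (n : nat) (k : 'I_(2 * n - 3)%N) : {set 'I_n} :=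
  [set x : 'I_n | (x == k./2 :> nat) || (x == k./2 + 1 + odd k :> nat)]%N.

Definition D_Pn (n : nat) : 'M[int]_(2 * n - 3)%N :=
  \matrix_(a, b) (steiner_dist (@path_rel n) (B_elt a :|: B_elt b))%:Z.

Definition degree (T : finType) (e : rel T) (x : T) : nat := #|[set y | e x y]|.

Definition pendant_edge (T : finType) (e : rel T) (alpha : {set T}) : bool :=
  [exists x, exists y, [&& alpha == [set x; y], e x y &
                           (degree e x == 1)%N || (degree e y == 1)%N]].

(* The k-th element of B spans the vertices B_lo k < B_hi k of
   the path, both nondecreasing in k, so the entry of D_{P_n} in row x and
   column y is B_hi (max x y) - B_lo (min x y); principal minors of such
   "max-min" matrices M_ij = h (max i j) - l (min i j) are again max-min
   matrices.  Subtracting from every row (then every column) the previous one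
   turns M into an arrowhead matrix with diagonal block diag (- d_i), where
   d_i = (l_(i+1) - l_i) + (h_(i+1) - h_i), and a Schur complement gives
     det M = prod_i (- d_i) * (h_0 - l_0 + sum_i (h_(i+1) - h_i)^2 / d_i).
   For the minor at alpha every d_i is 1, except for a single d_i = 2 at the
   step that jumps over alpha, which exists exactly when alpha is not pendant;
   this gives -(n - 1) and -(2n - 3) respectively. *)

From mathcomp Require Import all_boot all_order all_algebra zify ring.
Import Order.TTheory GRing.Theory Num.Theory.
Set Implicit Arguments. Unset Strict Implicit. Unset Printing Implicit Defensive.

Section PathSteiner.
Variable n : nat.

Local Notation path_in W := [rel a b : 'I_n | [&& path_rel a b, a \in W & b \in W]].

Lemma path_in_sym (W : {set 'I_n}) : symmetric (path_in W).
Proof. by move=> a b /=; rewrite /path_rel orbC [(a \in W) && _]andbC. Qed.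

Lemma connect_path_in_interval (W : {set 'I_n}) (x y z : 'I_n) :
  x \in W -> connect (path_in W) x y -> x <= z <= y -> z \in W.
Proof.
move=> xW /connectP [p]; elim: p x xW => [|v p IHp] x xW /=.
  by move=> _ -> zx; rewrite (_ : z = x) //; apply/ord_inj; lia.
case/andP => /and3P [xv _ vW] pv ylast xzy.
have [/ord_inj -> // | zx] := eqVneq (z : nat) x.
by apply: IHp vW pv ylast _; move: xv; rewrite /path_rel; lia.
Qed.

Lemma induced_connected_interval (x y : 'I_n) :
  induced_connected (@path_rel n) [set z : 'I_n | x <= z <= y].
Proof.
set I := [set z : 'I_n | x <= z <= y].
have fwd (u v : 'I_n) : u \in I -> v \in I -> u <= v -> connect (path_in I) u v.
  move=> uI vI uv.
  have [d ud] : exists d, v = u + d :> nat by exists (v - u); lia.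
  elim: d v vI uv ud => [|d IHd] v vI uv ud.
    by rewrite (_ : v = u) //; apply/ord_inj; lia.
  have ltv' : (u + d < n)%N by have := ltn_ord v; lia.
  have v'I : Ordinal ltv' \in I by move: uI vI; rewrite !inE /=; lia.
  apply: connect_trans (IHd _ v'I _ _) (connect1 _) => //=; first lia.
  by rewrite v'I vI /path_rel /= ud addnS eqxx.
apply/forallP => u; apply/implyP => uI; apply/forallP => v; apply/implyP => vI.
have [uv | /ltnW vu] := leqP u v; first exact: fwd.
by rewrite (sym_connect_sym (path_in_sym I)); apply: fwd.
Qed.

Lemma card_interval (x y : nat) : (x <= y < n)%N ->
  #|[set z : 'I_n | x <= z <= y]| = (y.+1 - x)%N.
Proof.
case/andP=> xy yn; rewrite cardsE cardE /enum_mem size_filter -enumT.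
rewrite (@eq_count _ _ [pred z : 'I_n | x <= z <= y]) //.
rewrite -(count_map val (fun z => x <= z <= y)) val_enum_ord.
rewrite -(subnKC yn) -(subnKC (leqW xy)) !iotaD !count_cat.
rewrite (@eq_in_count _ _ pred0 (iota 0 x)) ?count_pred0;
  last by move=> z; rewrite mem_iota /=; lia.
rewrite (@eq_in_count _ _ predT (iota _ (y.+1 - x))) ?count_predT ?size_iota;
  last by move=> z; rewrite mem_iota /=; lia.
rewrite (@eq_in_count _ _ pred0 (iota _ (n - _))) ?count_pred0 //;
  by [lia | move=> z; rewrite mem_iota /=; lia].
Qed.

Lemma steiner_dist_path (S : {set 'I_n}) (x y : 'I_n) :
  x \in S -> y \in S -> {in S, forall z : 'I_n, x <= z <= y} ->
  steiner_dist (@path_rel n) S = (y - x)%N.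
Proof.
move=> xS yS S_xy; set I := [set z : 'I_n | x <= z <= y].
have xy : x <= y by case/andP: (S_xy y yS).
have cardI : #|I| = (y - x).+1 by rewrite card_interval ?xy ?ltn_ord // subSn.
apply/eqP; rewrite eqn_leq; apply/andP; split.
  apply: leq_trans (@bigmin_le_cond _ nat _ _ I _ _ _) _; last by rewrite cardI.
  rewrite induced_connected_interval andbT.
  by apply/subsetP => z /S_xy; rewrite inE.
apply/(@bigmin_geP _ nat); split=> [|W /andP [SW connW]].
  by rewrite card_ord; have := ltn_ord y; lia.
have /(_ x) := forallP connW; rewrite (subsetP SW) //= => /forallP /(_ y).
rewrite (subsetP SW) //= => cxy.
have IW : I \subset W.
  apply/subsetP => z; rewrite inE.
  exact: connect_path_in_interval (subsetP SW x xS) cxy.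
have ltW : y - x < #|W| by rewrite -cardI subset_leq_card.
by rewrite leEnat -ltnS (ltn_predK ltW).
Qed.

End PathSteiner.

Local Open Scope ring_scope.

Lemma big_ord_eqS (R : Type) (idx : R) (op : Monoid.law idx) k a (x : R) :
  \big[op/idx]_(i < k) (if a == i.+1 then x else idx) =
  if (0 < a <= k)%N then x else idx.
Proof.
rewrite -big_mkcond (eq_bigl (fun i : 'I_k => (0 < a)%N && (i == a.-1 :> nat))).
  rewrite (big_ord1_cond_eq op (fun=> x) (fun=> 0 < a)%N).
  by congr (if _ then _ else _); lia.
by move=> i /=; lia.
Qed.

Lemma bump_succ a i : bump a i.+1 = ((bump a i).+1 + (a == i.+1))%N.
Proof. by rewrite /bump; lia. Qed.

Section DiffMatrix.
Variables (R : comRingType) (k : nat).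

Definition shift_mx : 'M[R]_k.+1 := \matrix_(i, j) (i == j.+1 :> nat)%:R.
Definition diff_mx : 'M[R]_k.+1 := 1%:M - shift_mx.

Lemma det_diff_mx : \det diff_mx = 1.
Proof.
rewrite det_trig; last first.
  apply/is_trig_mxP => i j ij.
  by rewrite !mxE -val_eqE /= !ltn_eqF ?subrr // ltnW.
by rewrite big1 // => i _; rewrite !mxE eqxx ltn_eqF // subr0.
Qed.

Lemma mul_shift_mx m (A : 'M[R]_(k.+1, m)) i j :
  (shift_mx *m A) i j = if val i is i'.+1 then A (inord i') j else 0.
Proof.
rewrite mxE; case: i => [[|i'] /= lti].
  by rewrite big1 // => l _; rewrite mxE mul0r.
have i'k : (i' < k.+1)%N by apply: ltnW.
rewrite (bigD1 (inord i')) //= mxE inordK // eqxx mul1r big1 ?addr0 // => l.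
move=> ne_l; rewrite mxE eqSS; case: eqP => [e|_]; last by rewrite mul0r.
by case/eqP: ne_l; apply: val_inj; rewrite /= inordK.
Qed.

Lemma mul_diff_mx m (A : 'M[R]_(k.+1, m)) i j :
  (diff_mx *m A) i j = A i j - (if val i is i'.+1 then A (inord i') j else 0).
Proof. by rewrite mulmxBl mul1mx -mul_shift_mx [LHS]mxE [X in _ + X]mxE. Qed.
End DiffMatrix.

Definition maxmin_mx (R : pzRingType) k (lo hi : nat -> R) : 'M[R]_k :=
  \matrix_(i, j) (hi (maxn i j) - lo (minn i j)).

Section MaxMinMatrix.
Variables (R : comRingType) (lo hi : nat -> R).

Lemma trmx_maxmin k : (maxmin_mx k lo hi)^T = maxmin_mx k lo hi.
Proof. by apply/matrixP => i j; rewrite !mxE maxnC minnC. Qed.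

Lemma maxmin_mx_minor k (a : 'I_k.+1) :
  row' a (col' a (maxmin_mx k.+1 lo hi)) =
  maxmin_mx k (fun i => lo (bump a i)) (fun i => hi (bump a i)).
Proof.
apply/matrixP => i j; rewrite !mxE /=.
case: (leqP i j) => ij; first by rewrite (maxn_idPr _) ?(minn_idPl _) ?leq_bump2.
by rewrite (maxn_idPl _) ?(minn_idPr _) ?leq_bump2 // ltnW.
Qed.

Lemma mul_diff_maxmin_mx k (i j : 'I_k.+1) :
  (diff_mx R k *m maxmin_mx k.+1 lo hi) i j =
  if val i is i'.+1 then
    (if (j <= i')%N then hi i'.+1 - hi i' else - (lo i'.+1 - lo i'))
  else hi j - lo 0.
Proof.
rewrite mul_diff_mx !mxE.
case: i => [[|i'] /= lti]; first by rewrite max0n min0n subr0.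
rewrite mxE inordK ?(ltnW lti) //; case: leqP => ji.
  by rewrite (maxn_idPl (leqW ji)) (minn_idPr (leqW ji)); ring.
by rewrite (maxn_idPr ji) (minn_idPl ji); ring.
Qed.

Lemma diff_maxmin_mx k :
  diff_mx R k *m maxmin_mx k.+1 lo hi *m (diff_mx R k)^T =
  block_mx (const_mx (hi 0 - lo 0) : 'M_1) (\row_(i < k) (hi i.+1 - hi i))
           (\col_(i < k) (hi i.+1 - hi i))
           (diag_mx (\row_(i < k) - (lo i.+1 - lo i + (hi i.+1 - hi i)))).
Proof.
rewrite -mulmxA -[maxmin_mx _ _ _ *m _]trmxK trmx_mul trmxK trmx_maxmin.
apply/matrixP => i j; rewrite -[i](@splitK 1 k) -[j](@splitK 1 k).
case: (@split 1 k i) => i0; case: (@split 1 k j) => j0 /=;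
  rewrite ?[RHS]block_mxEul ?[RHS]block_mxEur ?[RHS]block_mxEdl ?[RHS]block_mxEdr.
all: rewrite mul_diff_mx ![(_ ^T) _ _]mxE !mul_diff_maxmin_mx !mxE ?ord1 /=.
all: rewrite ?[(_ ^T) _ _]mxE ?mul_diff_maxmin_mx /= ?(inordK (ltnW (ltn_ord _))).
all: rewrite ?subr0 ?add0n ?add1n //.
  ring.
case: (ltngtP i0 j0) => [lt|gt|/ord_inj <-].
- by rewrite subrr -val_eqE /= (ltn_eqF lt).
- by rewrite subrr -val_eqE /= (gtn_eqF gt).
- rewrite eqxx mulr1n; ring.
Qed.

Lemma map_maxmin_mx (S : comRingType) (f : {additive R -> S}) k :
  map_mx f (maxmin_mx k lo hi) =
  maxmin_mx k (fun i => f (lo i)) (fun i => f (hi i)).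
Proof. by apply/matrixP => i j; rewrite !mxE raddfB. Qed.

End MaxMinMatrix.

Lemma det_block_schur (R : comRingType) m k (A : 'M[R]_m) (B : 'M_(m, k))
    (C : 'M_(k, m)) (D D' : 'M_k) :
  D *m D' = 1%:M -> \det (block_mx A B C D) = \det D * \det (A - B *m D' *m C).
Proof.
move=> DD'.
have elim_C : block_mx A B C D *m block_mx 1%:M 0 (- (D' *m C)) 1%:M
    = block_mx (A - B *m D' *m C) B 0 D.
  by rewrite mulmx_block !mulmx1 !mulmx0 !add0r !mulmxN !mulmxA DD' mul1mx addrN.
have := congr1 determinant elim_C.
by rewrite det_mulmx det_lblock !det1 !mulr1 det_ublock mulrC.
Qed.

Lemma det_maxmin_mx (F : fieldType) k (lo hi : nat -> F) :
  (forall i, (i < k)%N -> lo i.+1 - lo i + (hi i.+1 - hi i) != 0) ->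
  \det (maxmin_mx k.+1 lo hi) =
  (\prod_(i < k) - (lo i.+1 - lo i + (hi i.+1 - hi i))) *
  (hi 0 - lo 0 +
   \sum_(i < k) (hi i.+1 - hi i) ^+ 2 / (lo i.+1 - lo i + (hi i.+1 - hi i))).
Proof.
move=> d_neq0.
have -> : \det (maxmin_mx k.+1 lo hi) =
          \det (diff_mx F k *m maxmin_mx k.+1 lo hi *m (diff_mx F k)^T).
  by rewrite !det_mulmx det_tr det_diff_mx mul1r mulr1.
rewrite diff_maxmin_mx (@det_block_schur _ 1 k _ _ _ _
    (diag_mx (\row_(i < k) (- (lo i.+1 - lo i + (hi i.+1 - hi i)))^-1))).
  rewrite det_diag det_mx11 mul_mx_diag !mxE -sumrN.
  by congr (_ * (_ + _)); apply: eq_bigr => i _; rewrite !mxE // invrN; ring.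
apply/matrixP => i j; rewrite mul_diag_mx !mxE.
by rewrite mulrnAr mulfV // oppr_eq0 d_neq0.
Qed.

Definition B_lo (k : nat) : nat := k./2.
Definition B_hi (k : nat) : nat := k./2 + 1 + odd k.

Lemma D_Pn_maxmin n :
  D_Pn n = maxmin_mx (2 * n - 3) (fun q => (B_lo q)%:Z) (fun q => (B_hi q)%:Z).
Proof.
suff dist_B (x y : 'I_(2 * n - 3)) : (x <= y)%N ->
    steiner_dist (@path_rel n) (B_elt x :|: B_elt y) = (B_hi y - B_lo x)%N.
  apply/matrixP => x y; rewrite !mxE.
  have [xy | /ltnW yx] := leqP x y; [rewrite dist_B // | rewrite setUC dist_B //];
    by rewrite subzn // /B_lo /B_hi; lia.
move=> xy.
have lo_x : (B_lo x < n)%N by have := ltn_ord x; rewrite /B_lo; lia.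
have hi_y : (B_hi y < n)%N by have := ltn_ord y; rewrite /B_hi; lia.
apply: (@steiner_dist_path n _ (Ordinal lo_x) (Ordinal hi_y)).
- by rewrite !inE /B_lo /= eqxx.
- by rewrite !inE /B_hi /= eqxx !orbT.
by move=> z; rewrite !inE /B_lo /B_hi /= => /orP [] /orP [] /eqP ->; lia.
Qed.

Lemma degree_path_eq1 n (x : 'I_n) : (1 < n)%N ->
  (degree (@path_rel n) x == 1)%N = (x == 0 :> nat) || (x == n.-1 :> nat).
Proof.
move=> n_gt1; rewrite /degree; have x_lt := ltn_ord x.
have [end_x | inner_x] := boolP ((x == 0 :> nat) || (x == n.-1 :> nat)).
  have nb_lt : ((if x == 0 :> nat then 1 else n.-2) < n)%N by case: ifP; lia.
  apply/eqP/(eq_card1 (x := Ordinal nb_lt)) => y; have := ltn_ord y.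
  by rewrite !inE /path_rel -val_eqE /=; case: ifP => x0 y_lt; apply/idP/idP; lia.
have pred_lt : (x.-1 < n)%N by lia.
have succ_lt : (x.+1 < n)%N by lia.
have nbs : [set Ordinal pred_lt; Ordinal succ_lt] \subset [set y | path_rel x y].
  by apply/subsetP => y; rewrite !inE -!val_eqE /path_rel /=; lia.
have := subset_leq_card nbs; rewrite cards2 -val_eqE /= (_ : x.-1 == x.+1 = false).
  by case: #|_| => [|[|m]].
by lia.
Qed.

Lemma pendant_edge_B n (a : 'I_(2 * n - 3)) : (3 <= n)%N ->
  pendant_edge (@path_rel n) (B_elt a) =
  (a == 0 :> nat) || (a == (2 * n - 4)%N :> nat).
Proof.
move=> n_ge3; have a_lt := ltn_ord a; apply/idP/idP.
  case/existsP => x /existsP [y /and3P [/eqP aE xy]].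
  rewrite !degree_path_eq1 ?(ltnW n_ge3) //.
  have : x \in B_elt a by rewrite aE !inE eqxx.
  have : y \in B_elt a by rewrite aE !inE eqxx orbT.
  have := ltn_ord x; have := ltn_ord y.
  by move: xy; rewrite /B_elt !inE /path_rel; lia.
move=> a_end.
have x_lt : ((if a == 0 :> nat then 0 else n.-2) < n)%N by case: ifP; lia.
have y_lt : ((if a == 0 :> nat then 1 else n.-1) < n)%N by case: ifP; lia.
apply/existsP; exists (Ordinal x_lt); apply/existsP; exists (Ordinal y_lt).
rewrite !degree_path_eq1 ?(ltnW n_ge3) // /path_rel /=; apply/and3P; split.
- apply/eqP/setP => z; rewrite !inE -!val_eqE /=; have := ltn_ord z.
  by case: ifP => a0 z_lt; apply/idP/idP; lia.
- by case: ifP; lia.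
- by case: ifP; lia.
Qed.

Lemma B_lo_add_hi q : (B_lo q + B_hi q = q.+1)%N.
Proof. by rewrite /B_lo /B_hi; lia. Qed.

Lemma B_hi_bump_succ a i :
  B_hi (bump a i.+1) = (B_hi (bump a i) + ((a == i.+1) || ~~ odd (bump a i)))%N.
Proof. by rewrite /B_hi /bump; lia. Qed.

Lemma det_B_minor (F : numFieldType) n' (a : 'I_(n'.*2.+3)) :
  \det (row' a (col' a
    (maxmin_mx n'.*2.+3 (fun q => (B_lo q)%:R : F) (fun q => (B_hi q)%:R)))) =
  - (if (a == 0 :> nat) || (a == n'.*2.+2 :> nat) then n'.+2 else n'.*2.+3)%:R.
Proof.
rewrite maxmin_mx_minor /=.
set L := fun i => (B_lo (bump a i))%:R : F.
set H := fun i => (B_hi (bump a i))%:R : F.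
have gap_E i :
    L i.+1 - L i + (H i.+1 - H i) = if a == i.+1 :> nat then 2 else 1.
  have e : (B_lo (bump a i.+1) + B_hi (bump a i.+1) =
            B_lo (bump a i) + B_hi (bump a i) + (1 + (a == i.+1 :> nat)))%N.
    by rewrite !B_lo_add_hi bump_succ; lia.
  rewrite addrACA -opprD -!natrD e natrD addrC addKr.
  by case: (a == i.+1 :> nat).
have sq_E i : (H i.+1 - H i) ^+ 2 / (L i.+1 - L i + (H i.+1 - H i)) =
              H i.+1 - H i - (if a == i.+1 :> nat then 2^-1 else 0).
  rewrite gap_E /H B_hi_bump_succ natrD addrAC subrr add0r.
  by case: (a == i.+1 :> nat); case: (odd _) => /=; field.
rewrite det_maxmin_mx => [|i _];
  last by rewrite gap_E; case: ifP; rewrite ?oner_eq0 ?pnatr_eq0.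
under eq_bigr do rewrite gap_E.
under [X in _ * (_ + X)]eq_bigr do rewrite sq_E.
rewrite prodrN card_ord big_ord_eqS sumrB big_ord_eqS.
rewrite -(big_mkord xpredT (fun i => H i.+1 - H i)) telescope_sumr //.
have H_last : H n'.*2.+1 = n'.+2%:R.
  by rewrite /H (_ : B_hi _ = n'.+2) // /B_hi /bump; lia.
have L_0 : L 0 = 0 by rewrite /L (_ : B_lo _ = 0) // /B_lo /bump; lia.
have -> : (a == 0 :> nat) || (a == n'.*2.+2 :> nat) = ~~ (0 < a <= n'.*2.+1)%N.
  by have := ltn_ord a; lia.
rewrite H_last L_0 -signr_odd /= odd_double expr1.
case: (0 < a <= _)%N => /=.
  by rewrite -[n'.*2.+3]/(3 + n'.*2)%N -[n'.+2]/(2 + n')%N -muln2 !natrD natrM; field.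
ring.
Qed.

Theorem theorem5p13 (n : nat) (hn : (3 <= n)%N) (a : 'I_(2 * n - 3)%N) :
  \det (row' a (col' a (D_Pn n))) =
  (if pendant_edge (@path_rel n) (B_elt a) then - (n%:Z - 1)
   else - (2 * n%:Z - 3)).
Proof.
have dim_E : (2 * n - 3 = (n - 3).*2.+3)%N by lia.
have end_E : (2 * n - 4 = (n - 3).*2.+2)%N by lia.
have -> : (if pendant_edge (@path_rel n) (B_elt a) then - (n%:Z - 1)
           else - (2 * n%:Z - 3)) =
    - (if pendant_edge (@path_rel n) (B_elt a) then (n - 3).+2
       else (n - 3).*2.+3)%:Z.
  by case: ifP; lia.
rewrite pendant_edge_B // end_E; apply: (@intr_inj rat).
rewrite -det_map_mx map_row' map_col' D_Pn_maxmin map_maxmin_mx rmorphN /=.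
by move: a; rewrite dim_E => a; rewrite det_B_minor.
Qed.
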